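(* Let $N\ge2$, $t,r\ge1$, $m=t+r<N$, $K\ge N$, and let $\mathbf{z}\in\mathbb{C}^N$ and $\mathbf{S}\in\mathbb{C}^{N\times N}$ Hermitian positive definite. Define the GLRT statistic $$t_{\mathrm{GLRT}}=\frac{1+\mathbf{z}^\dagger\mathbf{S}^{-1/2}\mathbf{P}^\perp_{\mathbf{S}^{-1/2}\mathbf{E}_t}\mathbf{S}^{-1/2}\mathbf{z}}{1+\mathbf{z}^\dagger\mathbf{S}^{-1/2}\mathbf{P}^\perp_{\mathbf{S}^{-1/2}\mathbf{E}_m}\mathbf{S}^{-1/2}\mathbf{z}}.$$ Then $\mathbf{z}^\dagger\mathbf{S}^{-1/2}\mathbf{P}^\perp_{\mathbf{S}^{-1/2}\mathbf{E}_t}\mathbf{S}^{-1/2}\mathbf{z}=\frac{1-p_1p_2}{p_1p_2}$, $\mathbf{z}^\dagger\mathbf{S}^{-1/2}\mathbf{P}^\perp_{\mathbf{S}^{-1/2}\mathbf{E}_m}\mathbf{S}^{-1/2}\mathbf{z}=\frac{1-p_2}{p_2}$, and consequently $t_{\mathrm{GLRT}}=1/p_1$.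
   Context: $\mathbf{E}_t=[\mathbf{I}_t\ \mathbf{0}\ \mathbf{0}]^T\in\mathbb{C}^{N\times t}$, $\mathbf{E}_r=[\mathbf{0}\ \mathbf{I}_r\ \mathbf{0}]^T\in\mathbb{C}^{N\times r}$, $\mathbf{E}_m=[\mathbf{E}_t\ \mathbf{E}_r]$. For a full-column-rank $\mathbf{A}$, $\mathbf{P}_{\mathbf{A}}=\mathbf{A}(\mathbf{A}^\dagger\mathbf{A})^{-1}\mathbf{A}^\dagger$ and $\mathbf{P}^\perp_{\mathbf{A}}=\mathbf{I}_N-\mathbf{P}_{\mathbf{A}}$; $\mathbf{S}^{-1/2}$ is the Hermitian positive definite square root of $\mathbf{S}^{-1}$. Partition $\mathbf{z}=[\mathbf{z}_1^T\ \mathbf{z}_2^T\ \mathbf{z}_3^T]^T$ with sizes $t,r,N-m$ and $\mathbf{S}$ conformably into blocks $\mathbf{S}_{ij}$. $\mathbf{z}_{2.3}=\mathbf{z}_2-\mathbf{S}_{23}\mathbf{S}_{33}^{-1}\mathbf{z}_3$, $\mathbf{S}_{2.3}=\mathbf{S}_{22}-\mathbf{S}_{23}\mathbf{S}_{33}^{-1}\mathbf{S}_{32}$, $m_1=\mathbf{z}_{2.3}^\dagger\mathbf{S}_{2.3}^{-1}\mathbf{z}_{2.3}$, $m_2=\mathbf{z}_3^\dagger\mathbf{S}_{33}^{-1}\mathbf{z}_3$, $p_1=1/\bigl(1+\frac{m_1}{1+m_2}\bigr)$, $p_2=1/(1+m_2)$. *)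

From HB Require Import structures.
From mathcomp Require Import all_boot all_order all_algebra.
Set Implicit Arguments. Unset Strict Implicit. Unset Printing Implicit Defensive.
Import Order.TTheory GRing.Theory Num.Theory.
Local Open Scope ring_scope.
Local Open Scope sesquilinear_scope.

Section Defs.
Variable C : numClosedFieldType.

Definition hermitian_pd n (A : 'M[C]_n) : Prop :=
  A ^t* = A /\ forall x : 'cV[C]_n, x != 0 -> 0 < (x ^t* *m A *m x) ord0 ord0.

Definition projmx n k (A : 'M[C]_(n, k)) : 'M[C]_n :=
  A *m invmx (A ^t* *m A) *m A ^t*.
Definition projperp n k (A : 'M[C]_(n, k)) : 'M[C]_n := 1%:M - projmx A.

Definition qform n (x : 'cV[C]_n) (M : 'M[C]_n) : C := (x ^t* *m M *m x) ord0 ord0.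

(* selection matrices, with N = t + r + s *)
Definition Et t r s : 'M[C]_(t + r + s, t) := col_mx (col_mx 1%:M 0) 0.
Definition Er t r s : 'M[C]_(t + r + s, r) := col_mx (col_mx 0 1%:M) 0.
Definition Em t r s : 'M[C]_(t + r + s, t + r) := row_mx (Et t r s) (Er t r s).

Definition z2blk t r s (z : 'cV[C]_(t + r + s)) : 'cV[C]_r := dsubmx (usubmx z).
Definition z3blk t r s (z : 'cV[C]_(t + r + s)) : 'cV[C]_s := dsubmx z.
Definition S22 t r s (S : 'M[C]_(t + r + s)) : 'M[C]_r := drsubmx (ulsubmx S).
Definition S23 t r s (S : 'M[C]_(t + r + s)) : 'M[C]_(r, s) := dsubmx (ursubmx S).
Definition S32 t r s (S : 'M[C]_(t + r + s)) : 'M[C]_(s, r) := rsubmx (dlsubmx S).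
Definition S33 t r s (S : 'M[C]_(t + r + s)) : 'M[C]_s := drsubmx S.

End Defs.

From HB Require Import structures.
From mathcomp Require Import all_boot all_order all_algebra.
From mathcomp Require Import ring.
Import Order.TTheory GRing.Theory Num.Theory.
Set Implicit Arguments. Unset Strict Implicit. Unset Printing Implicit Defensive.
Local Open Scope ring_scope.
Local Open Scope sesquilinear_scope.

(* Write W = S^-1 = Sih Sih.  For a selection matrix E with complementary
   selection F (E^H F = 0, E E^H + F F^H = 1) the whitened residual form is
   Sih P^perp_{Sih E} Sih = W - W E (E^H W E)^-1 E^H W = F (F^H S F)^-1 F^H,
   so both quadratic forms only see the trailing blocks of z and S.  For E_m
   this is m2; for E_t it is the form of (z2, z3) against the inverse of the
   lower-right 2x2 block of S, which the Schur complement of S33 splits into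
   m1 + m2.  Both are nonnegative, and the formulas in p1, p2 follow by field
   arithmetic. *)

Section ConjugateTranspose.
Variable C : numClosedFieldType.

Lemma trmxC_mul m n p (A : 'M[C]_(m, n)) (B : 'M[C]_(n, p)) :
  (A *m B)^t* = B^t* *m A^t*.
Proof. by rewrite trmx_mul map_mxM. Qed.

Lemma trmxCB m n (A B : 'M[C]_(m, n)) : (A - B)^t* = A^t* - B^t*.
Proof. by rewrite linearB map_mxB. Qed.

Lemma trmxC0 m n : (0 : 'M[C]_(m, n))^t* = 0.
Proof. by rewrite trmx0 map_mx0. Qed.

Lemma trmxC1 n : (1%:M : 'M[C]_n)^t* = 1%:M.
Proof. by rewrite trmx1 map_mx1. Qed.

Lemma trmxC_col m1 m2 n (A : 'M[C]_(m1, n)) (B : 'M[C]_(m2, n)) :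
  (col_mx A B)^t* = row_mx (A^t*) (B^t*).
Proof. by rewrite tr_col_mx map_row_mx. Qed.

Lemma trmxC_row m n1 n2 (A : 'M[C]_(m, n1)) (B : 'M[C]_(m, n2)) :
  (row_mx A B)^t* = col_mx (A^t*) (B^t*).
Proof. by rewrite tr_row_mx map_col_mx. Qed.

Lemma trmxC_block m1 m2 n1 n2 (a : 'M[C]_(m1, n1)) (b : 'M[C]_(m1, n2))
    (c : 'M[C]_(m2, n1)) (d : 'M[C]_(m2, n2)) :
  (block_mx a b c d)^t* = block_mx (a^t*) (c^t*) (b^t*) (d^t*).
Proof. by rewrite tr_block_mx map_block_mx. Qed.

Lemma trmxC_inv n (A : 'M[C]_n) : (invmx A)^t* = invmx (A^t*).
Proof. by rewrite trmx_inv map_invmx. Qed.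

Lemma trmxC_congr n k (S : 'M[C]_n) (F : 'M[C]_(n, k)) :
  S^t* = S -> (F^t* *m S *m F)^t* = F^t* *m S *m F.
Proof. by move=> hS; rewrite !trmxC_mul trmxCK hS mulmxA. Qed.

Lemma qform_congr n k (z : 'cV[C]_n) (F : 'M[C]_(n, k)) (Y : 'M[C]_k) :
  qform z (F *m Y *m F^t*) = qform (F^t* *m z) Y.
Proof. by rewrite /qform trmxC_mul trmxCK !mulmxA. Qed.

End ConjugateTranspose.

Section PositiveDefinite.
Variable C : numClosedFieldType.

Definition posdefmx n (B : 'M[C]_n) : Prop :=
  forall x : 'cV[C]_n, x != 0 -> 0 < qform x B.

Lemma unitmx_ker0 n (A : 'M[C]_n) :
  (forall x : 'cV[C]_n, A *m x = 0 -> x = 0) -> A \in unitmx.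
Proof.
move=> ker0; rewrite -unitmx_tr unitmxE unitfE; apply/det0P => -[v v0 vA].
have /eqP : v^T = 0 by apply: ker0; rewrite -[A *m v^T]trmxK trmx_mul trmxK vA trmx0.
by rewrite -trmx0 (inj_eq trmx_inj) (negPf v0).
Qed.

Lemma posdefmx_unit n (B : 'M[C]_n) : posdefmx B -> B \in unitmx.
Proof.
move=> pB; apply: unitmx_ker0 => x Bx0; apply/eqP; apply: contraT => x0.
by have := pB x x0; rewrite /qform -mulmxA Bx0 mulmx0 mxE ltxx.
Qed.

Lemma posdefmx_congr n k (B : 'M[C]_n) (F : 'M[C]_(n, k)) :
  posdefmx B -> F^t* *m F = 1%:M -> posdefmx (F^t* *m B *m F).
Proof.
move=> pB isoF x x0.
have Fx0 : F *m x != 0.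
  by apply: contra x0 => /eqP Fx0; rewrite -[x]mul1mx -isoF -mulmxA Fx0 mulmx0.
by have := pB _ Fx0; rewrite /qform trmxC_mul !mulmxA.
Qed.

Lemma posdefmx_inv n (B : 'M[C]_n) :
  B^t* = B -> posdefmx B -> posdefmx (invmx B).
Proof.
move=> hB pB x x0; have uB := posdefmx_unit pB.
have Wx0 : invmx B *m x != 0.
  by apply: contra x0 => /eqP Wx0; rewrite -[x](mulKVmx uB) Wx0 mulmx0.
have := pB _ Wx0; rewrite /qform trmxC_mul trmxC_inv hB.
by rewrite -!mulmxA (mulmxA B) mulmxV // mul1mx !mulmxA.
Qed.

Lemma qform_invmx_ge0 n (B : 'M[C]_n) (u : 'cV[C]_n) :
  B^t* = B -> posdefmx B -> 0 <= qform u (invmx B).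
Proof.
move=> hB pB; have uB := posdefmx_unit pB.
have -> : u = B *m (invmx B *m u) by rewrite mulKVmx.
move: (invmx B *m u) => v; rewrite /qform trmxC_mul hB mulmxK //.
have [->|v0] := eqVneq v 0; first by rewrite !mulmx0 mxE.
by apply: ltW; have := pB v v0; rewrite /qform mulmxA.
Qed.

End PositiveDefinite.

Section WhitenedProjection.
Variable C : numClosedFieldType.

Lemma whitened_projperp n k (A W : 'M[C]_n) (E : 'M[C]_(n, k)) :
  A^t* = A -> A *m A = W ->
  A *m projperp (A *m E) *m A =
    W - W *m E *m invmx (E^t* *m W *m E) *m E^t* *m W.
Proof.
move=> hA AA; rewrite /projperp /projmx trmxC_mul hA.
rewrite [E^t* *m A *m (A *m E)]mulmxA -[E^t* *m A *m A]mulmxA AA.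
rewrite mulmxBr mulmx1 mulmxBl AA; congr (_ - _).
by rewrite !mulmxA AA -!mulmxA AA !mulmxA.
Qed.

(* The left side M kills E and maps S F to F; since E E^H + F F^H = 1 these
   two facts determine M. *)
Lemma deflated_invmx_complement n k l (S : 'M[C]_n)
    (E : 'M[C]_(n, k)) (F : 'M[C]_(n, l)) :
  S \in unitmx -> E^t* *m invmx S *m E \in unitmx ->
  F^t* *m S *m F \in unitmx -> E^t* *m F = 0 ->
  E *m E^t* + F *m F^t* = 1%:M ->
  invmx S - invmx S *m E *m invmx (E^t* *m invmx S *m E) *m E^t* *m invmx S =
    F *m invmx (F^t* *m S *m F) *m F^t*.
Proof.
move=> uS uE uF EF0 resol; set W := invmx S; set M := W - _.
have ME0 : M *m E = 0.
  rewrite mulmxBl -!mulmxA [E^t* *m (W *m E)]mulmxA.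
  by rewrite mulVmx // mulmx1 subrr.
have MSF : M *m (S *m F) = F.
  by rewrite mulmxBl -!mulmxA /W !mulKmx // EF0 !mulmx0 subr0.
have SF : S *m F = E *m (E^t* *m S *m F) + F *m (F^t* *m S *m F).
  by rewrite -[S *m F]mul1mx -resol mulmxDl !mulmxA.
have MF : M *m F = F *m invmx (F^t* *m S *m F).
  have MFY : M *m F *m (F^t* *m S *m F) = F.
    by move: MSF; rewrite SF mulmxDr !mulmxA ME0 !mul0mx add0r.
  by rewrite -[X in _ = X *m _]MFY mulmxK.
by rewrite -[M]mulmx1 -resol mulmxDr !mulmxA ME0 MF mul0mx add0r.
Qed.

Lemma qform_whitened_projperp n k l (S A : 'M[C]_n)
    (E : 'M[C]_(n, k)) (F : 'M[C]_(n, l)) (z : 'cV[C]_n) :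
  hermitian_pd S -> A^t* = A -> A *m A = invmx S ->
  E^t* *m E = 1%:M -> F^t* *m F = 1%:M -> E^t* *m F = 0 ->
  E *m E^t* + F *m F^t* = 1%:M ->
  qform z (A *m projperp (A *m E) *m A) =
    qform (F^t* *m z) (invmx (F^t* *m S *m F)).
Proof.
move=> [hS pS] hA AA isoE isoF EF0 resol.
have pW := posdefmx_inv hS pS.
rewrite (whitened_projperp _ hA AA) (deflated_invmx_complement (F := F)) //.
- exact: qform_congr.
- exact: posdefmx_unit pS.
- exact: posdefmx_unit (posdefmx_congr pW isoE).
- exact: posdefmx_unit (posdefmx_congr pS isoF).
Qed.

End WhitenedProjection.

Section SchurComplement.
Variable C : numClosedFieldType.

Lemma qform_invmx_block r s (a : 'M[C]_r) (b : 'M[C]_(r, s))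
    (c : 'M[C]_(s, r)) (d : 'M[C]_s) (z2 : 'cV[C]_r) (z3 : 'cV[C]_s) :
  let B := block_mx a b c d in
  B^t* = B -> posdefmx B ->
  qform (col_mx z2 z3) (invmx B) =
    qform (z2 - b *m invmx d *m z3) (invmx (a - b *m invmx d *m c)) +
    qform z3 (invmx d).
Proof.
move=> B hB pB.
have [_ _ bc hd] := eq_block_mx (etrans (esym (trmxC_block a b c d)) hB).
have pd : posdefmx d.
  have := posdefmx_congr pB (F := col_mx 0 1%:M).
  rewrite trmxC_col trmxC0 trmxC1 mul_row_col mul0mx mul1mx add0r => /(_ erefl).
  by rewrite mul_row_block !mul0mx !mul1mx !add0r mul_row_col mulmx0 mulmx1 add0r.
have ud := posdefmx_unit pd; have uB := posdefmx_unit pB.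
set Sc := a - b *m invmx d *m c; set z23 := z2 - b *m invmx d *m z3.
have uSc : Sc \in unitmx.
  apply: unitmx_ker0 => x Scx0.
  have : B *m col_mx x (- (invmx d *m (c *m x))) = 0.
    rewrite mul_block_col !mulmxN mulKVmx // subrr !mulmxA.
    by move: Scx0; rewrite /Sc mulmxBl => ->; rewrite col_mx0.
  move=> /(congr1 (mulmx (invmx B))); rewrite mulKmx // mulmx0 => /eqP.
  by rewrite col_mx_eq0 => /andP [/eqP].
have Bsol : invmx B *m col_mx z2 z3 =
    col_mx (invmx Sc *m z23) (invmx d *m (z3 - c *m (invmx Sc *m z23))).
  have : Sc *m (invmx Sc *m z23) = z23 by rewrite mulKVmx.
  move: (invmx Sc *m z23) => y2 Scy2.
  apply: (canLR (mulKmx uB)); apply/esym; rewrite mul_block_col.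
  congr col_mx; last by rewrite mulKVmx // addrC subrK.
  move: Scy2; rewrite /Sc mulmxBl => /eqP; rewrite subr_eq => /eqP ->.
  by rewrite !mulmxBr !mulmxA /z23 addrACA subrK subrr addr0.
rewrite /qform -mulmxA Bsol -[z23^t* *m _ *m _]mulmxA.
move: (invmx Sc *m z23) => y2.
rewrite trmxC_col mul_row_col /z23 trmxCB !trmxC_mul trmxC_inv hd bc.
by rewrite !mulmxBr !mulmxBl !mulmxA addrA addrAC mxE.
Qed.

End SchurComplement.

Ltac block_simpl := rewrite ?(trmxC_col, trmxC_row, trmxC0, trmxC1,
  mul_col_row, mul_row_col, mul_col_mx, mul_mx_row, mul_row_block,
  mul_block_col, mul0mx, mulmx0, mul1mx, mulmx1, add0r, addr0, row_mx0,
  col_mx0, block_mx0, mulmxDl, mulmxDr, add_row_mx, add_col_mx).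

Section SelectionMatrices.
Variables (C : numClosedFieldType) (t r s : nat).

Definition Et_perp : 'M[C]_(t + r + s, r + s) :=
  col_mx (col_mx 0 (row_mx 1%:M 0)) (row_mx 0 1%:M).
Definition Em_perp : 'M[C]_(t + r + s, s) := col_mx 0 1%:M.

Lemma EmE : Em C t r s = col_mx 1%:M 0.
Proof.
rewrite /Em /Et /Er -block_mxEh block_mxEv row_mx0 -block_mxEh.
by rewrite -scalar_mx_block.
Qed.

Lemma Et_isometry : (Et C t r s)^t* *m Et C t r s = 1%:M.
Proof. by rewrite /Et; block_simpl. Qed.

Lemma Et_perp_isometry : Et_perp^t* *m Et_perp = 1%:M.
Proof. by rewrite /Et_perp; block_simpl; rewrite -block_mxEh -scalar_mx_block. Qed.

Lemma Et_perp_orthogonal : (Et C t r s)^t* *m Et_perp = 0.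
Proof. by rewrite /Et /Et_perp; block_simpl. Qed.

Lemma Et_resolution : Et C t r s *m (Et C t r s)^t* + Et_perp *m Et_perp^t* = 1%:M.
Proof.
rewrite /Et /Et_perp; block_simpl; rewrite [RHS]scalar_mx_block /block_mx.
congr col_mx.
by rewrite -block_mxEv block_mxEh col_mx0 -block_mxEv -scalar_mx_block.
Qed.

Lemma Em_isometry : (Em C t r s)^t* *m Em C t r s = 1%:M.
Proof. by rewrite EmE; block_simpl. Qed.

Lemma Em_perp_isometry : Em_perp^t* *m Em_perp = 1%:M.
Proof. by rewrite /Em_perp; block_simpl. Qed.

Lemma Em_perp_orthogonal : (Em C t r s)^t* *m Em_perp = 0.
Proof. by rewrite EmE /Em_perp; block_simpl. Qed.

Lemma Em_resolution : Em C t r s *m (Em C t r s)^t* + Em_perp *m Em_perp^t* = 1%:M.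
Proof. by rewrite EmE /Em_perp; block_simpl; rewrite -block_mxEv -scalar_mx_block. Qed.

Lemma Et_perp_adj_mul (z : 'cV[C]_(t + r + s)) :
  Et_perp^t* *m z = col_mx (z2blk z) (z3blk z).
Proof. by rewrite -{1}[z]vsubmxK -{1}[usubmx z]vsubmxK /Et_perp; block_simpl. Qed.

Lemma Et_perp_congr (S : 'M[C]_(t + r + s)) :
  Et_perp^t* *m S *m Et_perp = block_mx (S22 S) (S23 S) (S32 S) (S33 S).
Proof.
rewrite -{1}[S]submxK -[ulsubmx S]submxK -[ursubmx S]vsubmxK.
by rewrite -[dlsubmx S]hsubmxK /Et_perp; block_simpl; rewrite -block_mxEh.
Qed.

Lemma Em_perp_adj_mul (z : 'cV[C]_(t + r + s)) : Em_perp^t* *m z = z3blk z.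
Proof. by rewrite -{1}[z]vsubmxK /Em_perp; block_simpl. Qed.

Lemma Em_perp_congr (S : 'M[C]_(t + r + s)) : Em_perp^t* *m S *m Em_perp = S33 S.
Proof. by rewrite -{1}[S]submxK /Em_perp; block_simpl. Qed.

End SelectionMatrices.

Lemma glrt_ratios (F : numFieldType) (m1 m2 : F) :
  0 <= m2 -> 0 <= m1 + m2 ->
  let p1 := 1 / (1 + m1 / (1 + m2)) in
  let p2 := 1 / (1 + m2) in
  [/\ m1 + m2 = (1 - p1 * p2) / (p1 * p2), m2 = (1 - p2) / p2
    & (1 + (m1 + m2)) / (1 + m2) = 1 / p1].
Proof.
move=> m2_ge0 m12_ge0 p1 p2.
have a0 : 1 + m2 != 0 by rewrite gt_eqF // ltr_wpDr.
have b0 : 1 + (m1 + m2) != 0 by rewrite gt_eqF // ltr_wpDr.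
have c0 : 1 + m1 / (1 + m2) != 0.
  have -> : 1 + m1 / (1 + m2) = (1 + (m1 + m2)) / (1 + m2) by field.
  by rewrite mulf_neq0 // invr_eq0.
rewrite /p1 /p2; split; field; rewrite ?a0 ?b0 ?c0 //.
all: by rewrite -addrA (addrC m2).
Qed.

Theorem mainTheorem6 (C : numClosedFieldType) (t r s K : nat)
  (ht : (0 < t)%N) (hr : (0 < r)%N) (hs : (0 < s)%N) (hK : (t + r + s <= K)%N)
  (z : 'cV[C]_(t + r + s)) (S Sih : 'M[C]_(t + r + s)) :
  hermitian_pd S ->
  (* Sih = S^{-1/2}: the Hermitian positive definite square root of S^{-1} *)
  hermitian_pd Sih -> Sih *m Sih = invmx S ->
  let z2 := z2blk z in
  let z3 := z3blk z in
  let z23 := z2 - S23 S *m invmx (S33 S) *m z3 in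
  let S2_3 := S22 S - S23 S *m invmx (S33 S) *m S32 S in
  let m1 := qform z23 (invmx S2_3) in
  let m2 := qform z3 (invmx (S33 S)) in
  let p1 := 1 / (1 + m1 / (1 + m2)) in
  let p2 := 1 / (1 + m2) in
  let qt := qform z (Sih *m projperp (Sih *m Et C t r s) *m Sih) in
  let qm := qform z (Sih *m projperp (Sih *m Em C t r s) *m Sih) in
  let tGLRT := (1 + qt) / (1 + qm) in
  qt = (1 - p1 * p2) / (p1 * p2) /\ qm = (1 - p2) / p2 /\ tGLRT = 1 / p1.
Proof.
move=> hpdS [hSih _] SihSih z2 z3 z23 S2_3 m1 m2 p1 p2 qt qm tGLRT.
have [hS pS] := hpdS.
have qmE : qm = m2.
  rewrite /qm (qform_whitened_projperp _ hpdS hSih SihSih (Em_isometry C t r s)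
    (Em_perp_isometry C t r s) (Em_perp_orthogonal C t r s) (Em_resolution C t r s)).
  by rewrite Em_perp_adj_mul Em_perp_congr.
have qtE : qt = qform (col_mx z2 z3) (invmx (Et_perp C t r s ^t* *m S *m Et_perp C t r s)).
  rewrite /qt (qform_whitened_projperp _ hpdS hSih SihSih (Et_isometry C t r s)
    (Et_perp_isometry C t r s) (Et_perp_orthogonal C t r s) (Et_resolution C t r s)).
  by rewrite Et_perp_adj_mul.
have hB := trmxC_congr (Et_perp C t r s) hS.
have pB := posdefmx_congr pS (Et_perp_isometry C t r s).
have qt_split : qt = m1 + m2.
  by rewrite qtE; move: hB pB; rewrite Et_perp_congr; apply: qform_invmx_block.
have m2_ge0 : 0 <= m2.
  rewrite /m2 -(Em_perp_congr S); apply: qform_invmx_ge0.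
    exact: trmxC_congr.
  exact: posdefmx_congr pS (Em_perp_isometry C t r s).
have qt_ge0 : 0 <= m1 + m2 by rewrite -qt_split qtE; apply: qform_invmx_ge0.
have [qt_ratio qm_ratio tGLRT_ratio] := glrt_ratios m2_ge0 qt_ge0.
by rewrite /tGLRT qt_split qmE; split.
Qed.
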